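(* Let $a>0$ be constant and consider $\partial_t u+\partial_x(au)=0$ on a periodic 1D mesh. Let $n\ge1$ and $-1=\tau_0<\tau_1<\dots<\tau_n=1$. Consider the Spectral Difference (SD) scheme (context) with flux points $\tau_0,\dots,\tau_n$ and solution points $\sigma_j=\tau_j$ for $j=1,\dots,n$ (the flux points excluding the left endpoint), with the upwind numerical flux. Consider also the FUSE scheme of degree $p=n$ with nodes $r_i=\tau_i$, $i=0,\dots,n$ (context). Then, under the identification $v_{j,k}=u_{j,k}$ for $j=1,\dots,n$ and all elements $k$ (which is a bijection between the unknowns of the two schemes, since $u_{0,k}=u_{n,k-1}$ in FUSE), the two semi-discrete systems of ODEs are identical.
   Context: Mesh: $0=x_0<\dots<x_N=1$, periodic, elements $K_k=[x_{k-1},x_k]$ (indices mod $N$), affine maps $\chi_k(r)=x_{k-1}+\tfrac{r+1}{2}(x_k-x_{k-1})$ from $[-1,1]$ to $K_k$. SD scheme: in each element $K_k$ there are $n$ solution points $\chi_k(\sigma_1),\dots,\chi_k(\sigma_n)$ carrying unknowns $v_{1,k},\dots,v_{n,k}$ (not shared between elements), and $n+1$ flux points $\chi_k(\tau_0),\dots,\chi_k(\tau_n)$ with $\tau_0=-1,\tau_n=1$ (so flux points at element endpoints are repeated in neighbouring elements). Let $v_h^{(k)}$ be the polynomial of degree $\le n-1$ on $K_k$ interpolating $v_{j,k}$ at the solution points. Flux values: at interior flux points ($0<m<n$) the flux is $a\,v_h^{(k)}(\chi_k(\tau_m))$; at element endpoints the upwind numerical flux is used, i.e. at $x_{k-1}$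 (point $\tau_0$ of $K_k$) the value $a\,v_h^{(k-1)}(x_{k-1})$ and at $x_k$ (point $\tau_n$ of $K_k$) the value $a\,v_h^{(k)}(x_k)$. Let $G^{(k)}$ be the polynomial of degree $\le n$ interpolating these $n+1$ flux values at the flux points; the SD update is $\frac{d}{dt}v_{j,k}=-(G^{(k)})'(\chi_k(\sigma_j))$. FUSE scheme of degree $p$ with nodes $-1=r_0<\dots<r_p=1$: nodes $s_{i,k}=\chi_k(r_i)$ with boundary nodes shared ($s_{p,k}=s_{0,k+1}$, single value, so $u_{0,k}=u_{p,k-1}$); $F_h^{(k)}$ is the polynomial of degree $\le p$ interpolating $a\,u_{i,k}$ at $s_{i,k}$, $i=0,\dots,p$; update $\frac{d}{dt}u_{i,k}=-(F_h^{(k)})'(s_{i,k})$ for $1\le i\le p-1$, and at the shared node $s_{p,k}=s_{0,k+1}$ the upwind element is used: since $a>0$, $\frac{d}{dt}u_{p,k}=-(F_h^{(k)})'(s_{p,k})$. *)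

From HB Require Import structures.
From mathcomp Require Import all_boot all_order all_algebra.
Set Implicit Arguments. Unset Strict Implicit. Unset Printing Implicit Defensive.
Import Order.TTheory GRing.Theory Num.Theory.
Local Open Scope ring_scope.

Section Schemes.
Variable R : realFieldType.

Definition interp (m : nat) (s : 'I_m -> R) (f : 'I_m -> R) : {poly R} :=
  \sum_(i < m) f i *:
     \prod_(j < m | j != i) (('X - (s j)%:P) * ((s i - s j)^-1)%:P).

(* Mesh 0 = x 0 < ... < x N = 1; element k : 'I_N is [x k, x (k+1)]
   (paper's K_{k+1}); its periodic left neighbour is ord_pred k. *)
Definition chi (x : nat -> R) (N : nat) (k : 'I_N) (r : R) : R :=
  x k + (r + 1) / 2 * (x k.+1 - x k).

Definition sd_vh (x : nat -> R) (N n : nat) (sigma : 'I_n -> R)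
  (v : 'I_N -> 'I_n -> R) (k : 'I_N) : {poly R} :=
  interp (fun j => chi x k (sigma j)) (v k).

Definition sd_flux (a : R) (x : nat -> R) (N n : nat) (sigma : 'I_n -> R)
  (tau : 'I_n.+1 -> R) (v : 'I_N -> 'I_n -> R) (k : 'I_N) (m : 'I_n.+1) : R :=
  if val m == 0%N then
    (* upwind: left endpoint x_k, value of the left neighbour's polynomial
       at its right endpoint (periodically identified with x_k) *)
    a * (sd_vh x sigma v (ord_pred k)).[x (ord_pred k).+1]
  else if val m == n then a * (sd_vh x sigma v k).[x k.+1]
  else a * (sd_vh x sigma v k).[chi x k (tau m)].

Definition sd_G (a : R) (x : nat -> R) (N n : nat) (sigma : 'I_n -> R)
  (tau : 'I_n.+1 -> R) (v : 'I_N -> 'I_n -> R) (k : 'I_N) : {poly R} :=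
  interp (fun m => chi x k (tau m)) (sd_flux a x sigma tau v k).

Definition sd_rhs (a : R) (x : nat -> R) (N n : nat) (sigma : 'I_n -> R)
  (tau : 'I_n.+1 -> R) (v : 'I_N -> 'I_n -> R) (k : 'I_N) (j : 'I_n) : R :=
  - (sd_G a x sigma tau v k)^`().[chi x k (sigma j)].

Definition fuse_shared (N p : nat) (u : 'I_N -> 'I_p.+1 -> R) : Prop :=
  forall k : 'I_N, u k ord0 = u (ord_pred k) ord_max.

Definition fuse_F (a : R) (x : nat -> R) (N p : nat) (r : 'I_p.+1 -> R)
  (u : 'I_N -> 'I_p.+1 -> R) (k : 'I_N) : {poly R} :=
  interp (fun i => chi x k (r i)) (fun i => a * u k i).

(* right-hand side of d/dt u_{i,k}, for 1 <= i <= p (at i = p the upwind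
   element k is used, a > 0) *)
Definition fuse_rhs (a : R) (x : nat -> R) (N p : nat) (r : 'I_p.+1 -> R)
  (u : 'I_N -> 'I_p.+1 -> R) (k : 'I_N) (i : 'I_p.+1) : R :=
  - (fuse_F a x r u k)^`().[chi x k (r i)].

End Schemes.

From HB Require Import structures.
From mathcomp Require Import all_boot all_order all_algebra.
Import Order.TTheory GRing.Theory Num.Theory.
Set Implicit Arguments. Unset Strict Implicit. Unset Printing Implicit Defensive.
Local Open Scope ring_scope.

(* With solution points sigma_j = tau_j (j >= 1), the SD polynomial v_h on an
   element interpolates u at the flux points tau_1, ..., tau_n, so the interior
   and right flux values are a u_{m,k}; the upwind value at the left endpoint is
   v_h of the left neighbour at its right endpoint tau_n, i.e. a u_{n,k-1},
   which is a u_{0,k} since FUSE shares that node.  Hence the SD flux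
   polynomial G and the FUSE polynomial F interpolate the same data at the same
   nodes, so they are equal and so are their derivatives at sigma_j = r_j. *)

Lemma horner_interp (R : realFieldType) (m : nat) (s f : 'I_m -> R) (i : 'I_m) :
  injective s -> (interp s f).[s i] = f i.
Proof.
move=> s_inj; rewrite /interp horner_sum (bigD1 i) //= [X in _ + X]big1 ?addr0.
- rewrite hornerZ horner_prod big1 ?mulr1 // => j ji.
  rewrite hornerM hornerXsubC hornerC mulfV // subr_eq0.
  by apply: contra ji => /eqP/s_inj ->.
- move=> i' i'i; rewrite hornerZ horner_prod (bigD1 i) 1?eq_sym //=.
  by rewrite hornerM hornerXsubC subrr !mul0r mulr0.
Qed.

Lemma eq_interp (R : realFieldType) (m : nat) (s f g : 'I_m -> R) :
  f =1 g -> interp s f = interp s g.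
Proof. by move=> fg; apply: eq_bigr => i _; rewrite fg. Qed.

Lemma chi1 (R : realFieldType) (x : nat -> R) (N : nat) (k : 'I_N) :
  chi x k 1 = x k.+1.
Proof. by rewrite /chi -(natrD _ 1 1) divff ?pnatr_eq0 // mul1r addrC subrK. Qed.

Lemma chi_inj (R : realFieldType) (x : nat -> R) (N : nat) (k : 'I_N) :
  x k < x k.+1 -> injective (chi x k).
Proof.
move=> xk_lt r1 r2 /addrI/mulIf; rewrite subr_eq0 gt_eqF // => /(_ isT).
by move/(congr1 ( *%R^~ 2)); rewrite !divfK ?pnatr_eq0 //; apply: addIr.
Qed.

Section SolutionPointsAtFluxPoints.

Variables (R : realFieldType) (a : R) (x : nat -> R) (N n : nat).
Variable tau : 'I_n.+1 -> R.
Hypothesis x_incr : forall k : 'I_N, x k < x k.+1.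
Hypothesis tau_inj : injective tau.
Hypothesis tau_max : tau ord_max = 1.
Variable u : 'I_N -> 'I_n.+1 -> R.

Let sigma (j : 'I_n) := tau (lift ord0 j).
Let v (k : 'I_N) (j : 'I_n) := u k (lift ord0 j).

Lemma sd_vh_flux_point (k : 'I_N) (m : 'I_n.+1) :
  m != ord0 -> (sd_vh x sigma v k).[chi x k (tau m)] = u k m.
Proof.
case: (unliftP ord0 m) => [j ->|->]; last by rewrite eqxx.
have sigma_inj : injective (fun j => chi x k (sigma j)).
  by move=> j1 j2 /(chi_inj (x_incr k))/tau_inj/lift_inj.
by rewrite (horner_interp _ _ sigma_inj).
Qed.

Lemma sd_vh_right_end (k : 'I_N) : (0 < n)%N ->
  (sd_vh x sigma v k).[x k.+1] = u k ord_max.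
Proof.
by move=> n_gt0; rewrite -chi1 -tau_max sd_vh_flux_point // -val_eqE /= -lt0n.
Qed.

Lemma sd_flux_fuse : (0 < n)%N -> fuse_shared u ->
  forall k : 'I_N, sd_flux a x sigma tau v k =1 (fun m => a * u k m).
Proof.
move=> n_gt0 u_shared k m; rewrite /sd_flux.
case: eqP => [m0|/eqP m_neq0].
  by rewrite (_ : m = ord0) ?u_shared ?sd_vh_right_end //; apply: val_inj.
case: eqP => [mn|_]; last by rewrite sd_vh_flux_point // -val_eqE.
by rewrite (_ : m = ord_max) ?sd_vh_right_end //; apply: val_inj.
Qed.

End SolutionPointsAtFluxPoints.

Theorem mainTheorem3 (R : realFieldType) (a : R) (N n : nat)
  (x : nat -> R) (tau : 'I_n.+1 -> R) :
  0 < a -> (0 < N)%N -> (1 <= n)%N ->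
  x 0%N = 0 -> x N = 1 -> (forall i : nat, (i < N)%N -> x i < x i.+1) ->
  tau ord0 = -1 -> tau ord_max = 1 ->
  (forall i j : 'I_n.+1, (i < j)%N -> tau i < tau j) ->
  forall u : 'I_N -> 'I_n.+1 -> R, fuse_shared u ->
  forall (k : 'I_N) (j : 'I_n),
    sd_rhs a x (fun j' : 'I_n => tau (lift ord0 j')) tau
      (fun k' j' => u k' (lift ord0 j')) k j
    = fuse_rhs a x tau u k (lift ord0 j).
Proof.
move=> _ _ n_gt0 _ _ x_incr _ tau_max tau_incr u u_shared k j.
have tau_inj : injective tau by apply: inc_inj; apply: le_mono; exact: tau_incr.
have x_incr_ord (k' : 'I_N) : x k' < x k'.+1 by apply: x_incr.
rewrite /sd_rhs /fuse_rhs /sd_G.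
by rewrite (eq_interp _ (sd_flux_fuse a x_incr_ord tau_inj tau_max n_gt0 u_shared k)).
Qed.
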